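(* If $E$ is a pseudo effect algebra satisfying (RDP), then its state space $\mathcal S(E)$ is either empty or a nonempty Choquet simplex (with respect to the weak topology).
   Context: Pseudo effect algebra: partial algebra $(E;+,0,1)$ such that for all $a,b,c$: (i) $a+b$ and $(a+b)+c$ exist iff $b+c$ and $a+(b+c)$ exist, and then they are equal; (ii) there is exactly one $d$ and one $e$ with $a+d=e+a=1$; (iii) if $a+b$ exists there are $d,e$ with $a+b=d+a=b+e$; (iv) if $1+a$ or $a+1$ exists then $a=0$. (RDP): whenever $a_1+a_2=b_1+b_2$ there are $d_1,\dots,d_4$ with $d_1+d_2=a_1$, $d_3+d_4=a_2$, $d_1+d_3=b_1$, $d_2+d_4=b_2$. A state is a map $s:E\to[0,\infty)$ with $s(a+b)=s(a)+s(b)$ whenever $a+b$ is defined and $s(1)=1$; $\mathcal S(E)$ is the set of states, a convex subset of $\mathbb R^E$, with the weak topology of pointwise convergence (it is compact Hausdorff). A convex cone $C$ in a real vector space $V$ is strict if $C\cap -C=\{0\}$; it induces the order $x\le_C y$ iff $y-x\in C$; it is a lattice cone if $C$ is a lattice under $\le_C$. A base of $C$ is a convex $K\subseteq C$ such that every nonzero $y\in C$ is uniquely $y=\alpha x$ with $\alpha>0$, $x\in K$. A simplex is a convex set affinely isomorphic to a base of a lattice cone in some real vector space; a Choquet simplex is a compact simplex in a locally convex Hausdorff space. *)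

From Stdlib Require Import Reals List.
Open Scope R_scope.
Set Implicit Arguments.

(* The partial operation + is modelled as [add : E -> E -> option E];
   [add a b = Some c] means "a+b is defined and equals c". *)

Definition defined {E : Type} (add : E -> E -> option E) (a b : E) : Prop :=
  exists c, add a b = Some c.

Definition is_pseudo_effect_algebra {E : Type} (add : E -> E -> option E)
    (zero one : E) : Prop :=
  (forall a b c,
      (exists ab, add a b = Some ab /\ defined add ab c) <->
      (exists bc, add b c = Some bc /\ defined add a bc)) /\
  (forall a b c ab bc x y,
      add a b = Some ab -> add ab c = Some x ->
      add b c = Some bc -> add a bc = Some y -> x = y) /\
  (forall a, (exists d, add a d = Some one /\ forall d', add a d' = Some one -> d' = d) /\
             (exists e, add e a = Some one /\ forall e', add e' a = Some one -> e' = e)) /\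
  (forall a b s, add a b = Some s ->
      exists d e, add d a = Some s /\ add b e = Some s) /\
  (forall a, (defined add one a \/ defined add a one) -> a = zero).

Definition RDP {E : Type} (add : E -> E -> option E) : Prop :=
  forall a1 a2 b1 b2 s, add a1 a2 = Some s -> add b1 b2 = Some s ->
    exists d1 d2 d3 d4,
      add d1 d2 = Some a1 /\ add d3 d4 = Some a2 /\
      add d1 d3 = Some b1 /\ add d2 d4 = Some b2.

Definition is_state {E : Type} (add : E -> E -> option E) (one : E)
    (s : E -> R) : Prop :=
  (forall a, 0 <= s a) /\
  (forall a b c, add a b = Some c -> s c = s a + s b) /\
  s one = 1.

Record RVectorSpace := {
  vcar :> Type;
  vadd : vcar -> vcar -> vcar;
  vzero : vcar;
  vopp : vcar -> vcar;
  vscal : R -> vcar -> vcar;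
  vaddA : forall x y z, vadd x (vadd y z) = vadd (vadd x y) z;
  vaddC : forall x y, vadd x y = vadd y x;
  vadd0 : forall x, vadd x vzero = x;
  vaddN : forall x, vadd x (vopp x) = vzero;
  vscal1 : forall x, vscal 1 x = x;
  vscalA : forall a b x, vscal a (vscal b x) = vscal (a * b) x;
  vscalDr : forall a x y, vscal a (vadd x y) = vadd (vscal a x) (vscal a y);
  vscalDl : forall a b x, vscal (a + b) x = vadd (vscal a x) (vscal b x)
}.

Section Cones.
Context {W : RVectorSpace}.

Definition vsub (x y : W) : W := vadd W x (vopp W y).

Definition is_convex_cone (C : W -> Prop) : Prop :=
  C (vzero W) /\
  (forall x y, C x -> C y -> C (vadd W x y)) /\
  (forall a x, 0 <= a -> C x -> C (vscal W a x)).

Definition is_strict_cone (C : W -> Prop) : Prop :=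
  forall x, C x -> C (vopp W x) -> x = vzero W.

Definition cone_le (C : W -> Prop) (x y : W) : Prop := C (vsub y x).

Definition is_lattice_cone (C : W -> Prop) : Prop :=
  is_convex_cone C /\ is_strict_cone C /\
  (forall x y, C x -> C y ->
     (exists z, C z /\ cone_le C x z /\ cone_le C y z /\
        forall w, C w -> cone_le C x w -> cone_le C y w -> cone_le C z w) /\
     (exists z, C z /\ cone_le C z x /\ cone_le C z y /\
        forall w, C w -> cone_le C w x -> cone_le C w y -> cone_le C w z)).

Definition is_convex_W (K : W -> Prop) : Prop :=
  forall x y l, K x -> K y -> 0 <= l <= 1 ->
    K (vadd W (vscal W l x) (vscal W (1 - l) y)).

Definition is_base (C K : W -> Prop) : Prop :=
  is_convex_W K /\ (forall x, K x -> C x) /\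
  (forall y, C y -> y <> vzero W ->
     exists a x, 0 < a /\ K x /\ y = vscal W a x /\
       forall a' x', 0 < a' -> K x' -> y = vscal W a' x' -> a' = a /\ x' = x).

End Cones.

Definition conv_comb {E : Type} (l : R) (f g : E -> R) : E -> R :=
  fun x => l * f x + (1 - l) * g x.

Definition is_convex {E : Type} (S : (E -> R) -> Prop) : Prop :=
  forall f g l, S f -> S g -> 0 <= l <= 1 -> S (conv_comb l f g).

Definition is_simplex {E : Type} (S : (E -> R) -> Prop) : Prop :=
  is_convex S /\
  exists (W : RVectorSpace) (C K : W -> Prop) (phi : (E -> R) -> W),
    @is_lattice_cone W C /\ @is_base W C K /\
    (forall f, S f -> K (phi f)) /\
    (forall x, K x -> exists f, S f /\ phi f = x) /\
    (forall f g, S f -> S g -> phi f = phi g -> f = g) /\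
    (forall f g l, S f -> S g -> 0 <= l <= 1 ->
       phi (conv_comb l f g) = vadd W (vscal W l (phi f)) (vscal W (1 - l) (phi g))).

(** * Weak topology (pointwise convergence = product topology) on R^E *)
Definition weak_open {E : Type} (U : (E -> R) -> Prop) : Prop :=
  forall f, U f -> exists (F : list E) (eps : R), 0 < eps /\
    forall g, (forall x, In x F -> Rabs (g x - f x) < eps) -> U g.

Definition weak_compact {E : Type} (S : (E -> R) -> Prop) : Prop :=
  forall (I : Type) (U : I -> (E -> R) -> Prop),
    (forall i, weak_open (U i)) ->
    (forall f, S f -> exists i, U i f) ->
    exists (J : list I), forall f, S f -> exists i, In i J /\ U i f.

(** A Choquet simplex inside the locally convex Hausdorff space R^E with the
    weak topology: a compact simplex. *)
Definition is_Choquet_simplex {E : Type} (S : (E -> R) -> Prop) : Prop :=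
  is_simplex S /\ weak_compact S.

From Stdlib Require Import Reals Lra List Classical ClassicalEpsilon FunctionalExtensionality.
From mathcomp Require classical_sets filter.
Open Scope R_scope.

(* The states of E form the base {s | s(1) = 1} of the cone of positive additive
   functions E -> R, and this base sits inside R^E, so the identity serves as the
   affine embedding.  Under (RDP) the cone is a lattice: the infimum of f and g is
   a |-> inf {f(a1) + g(a2) | a1 + a2 = a}, and the supremum is f + g - (f /\ g).
   Compactness is Tychonoff's argument: states take values in [0, 1], so an
   ultrafilter containing the state space converges pointwise, and the limit is
   again a state because each state condition involves finitely many coordinates. *)

Definition additive {E : Type} (add : E -> E -> option E) (f : E -> R) : Prop :=
  forall a b c, add a b = Some c -> f c = f a + f b.

Definition positive_additive {E : Type} (add : E -> E -> option E) (f : E -> R) : Prop :=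
  (forall a, 0 <= f a) /\ additive add f.

Section PseudoEffectAlgebra.
Context {E : Type} {add : E -> E -> option E} {zero one : E}.
Hypothesis hPEA : is_pseudo_effect_algebra add zero one.

Lemma add_assoc_lr {a b c ab s} :
  add a b = Some ab -> add ab c = Some s -> exists bc, add b c = Some bc /\ add a bc = Some s.
Proof.
  destruct hPEA as [assoc_def [assoc_eq _]]. intros Hab Hs.
  destruct (proj1 (assoc_def a b c)) as [bc [Hbc [y Hy]]].
  { exists ab. split; [exact Hab | exists s; exact Hs]. }
  exists bc. split; [exact Hbc |].
  rewrite (assoc_eq a b c ab bc s y Hab Hs Hbc Hy). exact Hy.
Qed.

Lemma add_assoc_rl {a b c bc s} :
  add b c = Some bc -> add a bc = Some s -> exists ab, add a b = Some ab /\ add ab c = Some s.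
Proof.
  destruct hPEA as [assoc_def [assoc_eq _]]. intros Hbc Hs.
  destruct (proj2 (assoc_def a b c)) as [ab [Hab [y Hy]]].
  { exists bc. split; [exact Hbc | exists s; exact Hs]. }
  exists ab. split; [exact Hab |].
  rewrite <- (assoc_eq a b c ab bc y s Hab Hy Hbc Hs). exact Hy.
Qed.

Lemma add_swap_l {a b s} : add a b = Some s -> exists d, add d a = Some s.
Proof.
  destruct hPEA as (_ & _ & _ & swap & _). intros Hs.
  destruct (swap a b s Hs) as [d [_ [Hd _]]]. exists d. exact Hd.
Qed.

Lemma add_complement a : exists d, add a d = Some one.
Proof.
  destruct hPEA as (_ & _ & compl & _).
  destruct (compl a) as [[d [Hd _]] _]. exists d. exact Hd.
Qed.

Lemma add_one_zero : add one zero = Some one /\ add zero one = Some one.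
Proof.
  destruct hPEA as (_ & _ & compl & _ & one_max).
  destruct (compl one) as [[d [Hd _]] [e [He _]]].
  assert (d = zero) by (apply one_max; left; exists one; exact Hd).
  assert (e = zero) by (apply one_max; right; exists one; exact He).
  subst. split; assumption.
Qed.

(* With e + a = 1, a is the unique d with e + d = 1 by (ii); associating
   (e + a) + 0 = 1 gives e + (a + 0) = 1, hence a + 0 = a. *)
Lemma add_zero_r a : add a zero = Some a.
Proof.
  destruct hPEA as (_ & _ & compl & _).
  destruct (proj2 (compl a)) as [e [He _]].
  destruct (proj1 (compl e)) as [d [Hd d_unique]].
  assert (a = d) by (apply d_unique; exact He). subst a.
  destruct (add_assoc_lr Hd (proj1 add_one_zero)) as [d0 [Hd0 Hed0]].
  rewrite (d_unique d0 Hed0) in Hd0. exact Hd0.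
Qed.

Lemma add_zero_l a : add zero a = Some a.
Proof.
  destruct hPEA as (_ & _ & compl & _).
  destruct (proj1 (compl a)) as [d [Hd _]].
  destruct (proj2 (compl d)) as [e [He e_unique]].
  assert (a = e) by (apply e_unique; exact Hd). subst a.
  destruct (add_assoc_rl He (proj2 add_one_zero)) as [e0 [He0 He0d]].
  rewrite (e_unique e0 He0d) in He0. exact He0.
Qed.

Lemma additive_zero {f} : additive add f -> f zero = 0.
Proof. intros Af. pose proof (Af _ _ _ (add_zero_r zero)). lra. Qed.

Lemma positive_additive_le_one {f} : positive_additive add f -> forall a, f a <= f one.
Proof.
  intros [Pf Af] a. destruct (add_complement a) as [d Hd].
  rewrite (Af _ _ _ Hd). specialize (Pf d). lra.
Qed.

Lemma state_bounded {s} : is_state add one s -> forall a, 0 <= s a <= 1.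
Proof.
  intros [Ps [As Os]] a. rewrite <- Os.
  split; [apply Ps | apply (positive_additive_le_one (conj Ps As))].
Qed.

End PseudoEffectAlgebra.

Lemma additive_add {E : Type} {add : E -> E -> option E} {f g : E -> R} :
  additive add f -> additive add g -> additive add (fun a => f a + g a).
Proof. intros Af Ag a b c Hc. rewrite (Af _ _ _ Hc), (Ag _ _ _ Hc). ring. Qed.

Lemma additive_sub {E : Type} {add : E -> E -> option E} {f g : E -> R} :
  additive add f -> additive add g -> additive add (fun a => f a - g a).
Proof. intros Af Ag a b c Hc. rewrite (Af _ _ _ Hc), (Ag _ _ _ Hc). ring. Qed.

Lemma additive_scal {E : Type} {add : E -> E -> option E} (r : R) {f : E -> R} :
  additive add f -> additive add (fun a => r * f a).
Proof. intros Af a b c Hc. rewrite (Af _ _ _ Hc). ring. Qed.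

Lemma state_space_convex {E : Type} (add : E -> E -> option E) (one : E) :
  is_convex (is_state add one).
Proof.
  intros f g l [Pf [Af Of]] [Pg [Ag Og]] Hl. unfold conv_comb. split; [| split].
  - intro a. specialize (Pf a). specialize (Pg a).
    apply Rplus_le_le_0_compat; apply Rmult_le_pos; lra.
  - exact (additive_add (additive_scal l Af) (additive_scal (1 - l) Ag)).
  - rewrite Of, Og. ring.
Qed.

Definition is_glb (P : R -> Prop) (l : R) : Prop :=
  (forall x, P x -> l <= x) /\ (forall m, (forall x, P x -> m <= x) -> m <= l).

(* The infimum is the supremum of the set of lower bounds. *)
Lemma glb_exists (P : R -> Prop) (m : R) :
  (exists x, P x) -> (forall x, P x -> m <= x) -> exists l, is_glb P l.
Proof.
  intros [x0 Px0] Hm.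
  destruct (completeness (fun m' => forall x, P x -> m' <= x)) as [l [l_ub l_least]].
  - exists x0. intros m' Hm'. exact (Hm' x0 Px0).
  - exists m. exact Hm.
  - exists l. split.
    + intros x Px. apply l_least. intros m' Hm'. exact (Hm' x Px).
    + exact l_ub.
Qed.

Lemma glb_le_add (P Q : R -> Prop) l1 l2 m :
  is_glb P l1 -> is_glb Q l2 -> (forall x y, P x -> Q y -> m <= x + y) -> m <= l1 + l2.
Proof.
  intros [_ l1_greatest] [_ l2_greatest] Hm.
  assert (Hy : forall y, Q y -> m - l1 <= y).
  { intros y Qy. assert (m - y <= l1); [| lra].
    apply l1_greatest. intros x Px. specialize (Hm x y Px Qy). lra. }
  specialize (l2_greatest _ Hy). lra.
Qed.

Definition decomposition_values {E : Type} (add : E -> E -> option E) (f g : E -> R)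
    (a : E) (r : R) : Prop :=
  exists a1 a2, add a1 a2 = Some a /\ r = f a1 + g a2.

Section RieszMeet.
Context {E : Type} {add : E -> E -> option E} {zero one : E}.
Hypothesis hPEA : is_pseudo_effect_algebra add zero one.
Context {f g h : E -> R}.
Hypotheses (f_additive : additive add f) (g_additive : additive add g).
Hypothesis h_glb : forall a, is_glb (decomposition_values add f g a) (h a).

Lemma meet_le_decomposition {a1 a2 a} : add a1 a2 = Some a -> h a <= f a1 + g a2.
Proof. intros Ha. apply (proj1 (h_glb a)). exists a1, a2. split; [exact Ha | reflexivity]. Qed.

Lemma meet_greatest_bound a m :
  (forall a1 a2, add a1 a2 = Some a -> m <= f a1 + g a2) -> m <= h a.
Proof. intros Hm. apply (proj2 (h_glb a)). intros r [a1 [a2 [Ha ->]]]. exact (Hm a1 a2 Ha). Qed.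

(* (a1 + a2) + (b1 + b2) regroups as (a1 + d) + (a2 + b2), where d + a2 = a2 + b1
   by axiom (iii), so that f d = f b1. *)
Lemma meet_subadditive {a b c} : add a b = Some c -> h c <= h a + h b.
Proof.
  intros Hc.
  apply (glb_le_add (decomposition_values add f g a) (decomposition_values add f g b));
    [apply h_glb | apply h_glb |].
  intros ra rb [a1 [a2 [Ha ->]]] [b1 [b2 [Hb ->]]].
  destruct (add_assoc_lr hPEA Ha Hc) as [t [Ht Hat]].
  destruct (add_assoc_rl hPEA Hb Ht) as [u [Hu Hut]].
  destruct (add_swap_l hPEA Hu) as [d Hd].
  destruct (add_assoc_lr hPEA Hd Hut) as [v [Hv Hdv]].
  destruct (add_assoc_rl hPEA Hdv Hat) as [w [Hw Hwv]].
  pose proof (meet_le_decomposition Hwv) as Hc_le.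
  rewrite (f_additive _ _ _ Hw), (g_additive _ _ _ Hv) in Hc_le.
  pose proof (f_additive _ _ _ Hd). pose proof (f_additive _ _ _ Hu). lra.
Qed.

Lemma meet_superadditive : RDP add -> forall {a b c}, add a b = Some c -> h a + h b <= h c.
Proof.
  intros hRDP a b c Hc. apply meet_greatest_bound. intros c1 c2 Hc12.
  destruct (hRDP _ _ _ _ _ Hc Hc12) as (d1 & d2 & d3 & d4 & H12 & H34 & H13 & H24).
  pose proof (meet_le_decomposition H12). pose proof (meet_le_decomposition H34).
  rewrite (f_additive _ _ _ H13), (g_additive _ _ _ H24). lra.
Qed.

Lemma meet_le_l a : h a <= f a.
Proof.
  pose proof (meet_le_decomposition (add_zero_r hPEA a)) as Ha.
  rewrite (additive_zero hPEA g_additive) in Ha. lra.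
Qed.

Lemma meet_le_r a : h a <= g a.
Proof.
  pose proof (meet_le_decomposition (add_zero_l hPEA a)) as Ha.
  rewrite (additive_zero hPEA f_additive) in Ha. lra.
Qed.

Lemma meet_greatest k :
  additive add k -> (forall a, k a <= f a) -> (forall a, k a <= g a) -> forall a, k a <= h a.
Proof.
  intros Ak kf kg a. apply meet_greatest_bound. intros a1 a2 Ha.
  rewrite (Ak _ _ _ Ha). specialize (kf a1). specialize (kg a2). lra.
Qed.

End RieszMeet.

Lemma positive_additive_meet {E : Type} {add : E -> E -> option E} {zero one : E}
    (hPEA : is_pseudo_effect_algebra add zero one) (hRDP : RDP add) {f g : E -> R} :
  positive_additive add f -> positive_additive add g ->
  exists h, positive_additive add h /\ (forall a, h a <= f a) /\ (forall a, h a <= g a) /\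
    (forall k, additive add k -> (forall a, k a <= f a) -> (forall a, k a <= g a) ->
       forall a, k a <= h a).
Proof.
  intros [Pf Af] [Pg Ag].
  assert (Hglb : forall a, exists l, is_glb (decomposition_values add f g a) l).
  { intro a. apply (glb_exists _ 0).
    - exists (f a + g zero), a, zero. split; [apply (add_zero_r hPEA) | reflexivity].
    - intros r [a1 [a2 [_ ->]]]. specialize (Pf a1). specialize (Pg a2). lra. }
  destruct (choice _ Hglb) as [h h_glb].
  exists h. split; [split | split; [| split]].
  - intro a. apply (meet_greatest_bound h_glb). intros a1 a2 _.
    specialize (Pf a1). specialize (Pg a2). lra.
  - intros a b c Hc. apply Rle_antisym.
    + exact (meet_subadditive hPEA Af Ag h_glb Hc).
    + exact (meet_superadditive Af Ag h_glb hRDP Hc).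
  - exact (meet_le_l hPEA Ag h_glb).
  - exact (meet_le_r hPEA Af h_glb).
  - exact (meet_greatest h_glb).
Qed.

Definition fun_vs (E : Type) : RVectorSpace.
Proof.
  refine (@Build_RVectorSpace (E -> R) (fun f g a => f a + g a) (fun _ => 0)
            (fun f a => - f a) (fun r f a => r * f a) _ _ _ _ _ _ _ _);
    intros; apply functional_extensionality; intro; ring.
Defined.

Section StateCone.
Context {E : Type} {add : E -> E -> option E} {zero one : E}.
Hypothesis hPEA : is_pseudo_effect_algebra add zero one.

Lemma positive_additive_cone_le {f g : E -> R} :
  additive add f -> additive add g ->
  (@cone_le (fun_vs E) (positive_additive add) f g <-> forall a, f a <= g a).
Proof.
  intros Af Ag. unfold cone_le, vsub. cbn. split.
  - intros [Pgf _] a. specialize (Pgf a). lra.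
  - intros Hfg. split; [intro a; specialize (Hfg a); lra |].
    exact (additive_sub Ag Af).
Qed.

Lemma positive_additive_convex_cone : @is_convex_cone (fun_vs E) (positive_additive add).
Proof.
  split; [| split]; cbn.
  - split; [intro a; lra | intros a b c _; ring].
  - intros f g [Pf Af] [Pg Ag]. split; [| exact (additive_add Af Ag)].
    intro a. specialize (Pf a). specialize (Pg a). lra.
  - intros r f Hr [Pf Af]. split; [| exact (additive_scal r Af)].
    intro a. apply Rmult_le_pos; [exact Hr | apply Pf].
Qed.

Lemma positive_additive_strict_cone : @is_strict_cone (fun_vs E) (positive_additive add).
Proof.
  intros f [Pf _] [Pnf _]. extensionality a. cbn in *.
  specialize (Pf a). specialize (Pnf a). lra.
Qed.

(* The join of f and g is f + g - (f /\ g); it is least because, for w above f and g,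
   f + g - w is an additive function below both, hence below the meet. *)
Lemma positive_additive_lattice_cone :
  RDP add -> @is_lattice_cone (fun_vs E) (positive_additive add).
Proof.
  intros hRDP.
  split; [exact positive_additive_convex_cone | split; [exact positive_additive_strict_cone |]].
  intros f g Cf Cg.
  destruct (positive_additive_meet hPEA hRDP Cf Cg) as (h & Ch & hf & hg & h_greatest).
  destruct Cf as [Pf Af]; destruct Cg as [Pg Ag]; pose proof (proj2 Ch) as Ah.
  assert (Aj : additive add (fun a => f a + g a - h a)) by exact (additive_sub (additive_add Af Ag) Ah).
  split.
  - exists (fun a => f a + g a - h a).
    split; [| split; [| split]].
    + split; [| exact Aj]. intro a. specialize (Pf a). specialize (hg a). lra.
    + apply positive_additive_cone_le; [exact Af | exact Aj |].
      intro a. specialize (hg a). lra.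
    + apply positive_additive_cone_le; [exact Ag | exact Aj |].
      intro a. specialize (hf a). lra.
    + intros w [_ Aw] Hfw Hgw.
      rewrite (positive_additive_cone_le Af Aw) in Hfw.
      rewrite (positive_additive_cone_le Ag Aw) in Hgw.
      apply (positive_additive_cone_le Aj Aw). intro a.
      assert (Hk : f a + g a - w a <= h a).
      { apply (h_greatest (fun b => f b + g b - w b)); [exact (additive_sub (additive_add Af Ag) Aw) | |];
          intro b; specialize (Hfw b); specialize (Hgw b); lra. }
      lra.
  - exists h.
    split; [exact Ch | split; [| split]].
    + apply (positive_additive_cone_le Ah Af). exact hf.
    + apply (positive_additive_cone_le Ah Ag). exact hg.
    + intros w [_ Aw] Hwf Hwg.
      rewrite (positive_additive_cone_le Aw Af) in Hwf.
      rewrite (positive_additive_cone_le Aw Ag) in Hwg.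
      apply (positive_additive_cone_le Aw Ah). exact (h_greatest w Aw Hwf Hwg).
Qed.

(* A nonzero positive additive y has y(1) > 0, and y = y(1) * (y / y(1)). *)
Lemma state_space_base : @is_base (fun_vs E) (positive_additive add) (is_state add one).
Proof.
  split; [| split].
  - intros f g l Sf Sg Hl. exact (state_space_convex add one f g l Sf Sg Hl).
  - intros s [Ps [As _]]. split; assumption.
  - intros y Cy Hy0. destruct Cy as [Py Ay].
    assert (y_one_pos : 0 < y one).
    { destruct (Rle_lt_or_eq_dec 0 (y one) (Py one)) as [| Hy1]; [assumption |].
      exfalso. apply Hy0. extensionality b. cbn.
      pose proof (positive_additive_le_one hPEA (conj Py Ay) b). specialize (Py b). lra. }
    exists (y one), (fun b => y b / y one).
    split; [exact y_one_pos | split; [| split]].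
    + split; [| split].
      * intro b. apply Rmult_le_pos; [apply Py | left; apply Rinv_0_lt_compat; exact y_one_pos].
      * intros a b c Hc. rewrite (Ay _ _ _ Hc). field. lra.
      * field. lra.
    + extensionality b. cbn. field. lra.
    + intros r s Hr [_ [_ Os]] Hys.
      assert (Hr_eq : r = y one) by (rewrite Hys; cbn; rewrite Os; ring).
      split; [exact Hr_eq |].
      extensionality b. rewrite Hys. cbn. rewrite Os. field. lra.
Qed.

Lemma state_space_simplex : RDP add -> is_simplex (is_state add one).
Proof.
  intros hRDP. split; [apply state_space_convex |].
  exists (fun_vs E), (positive_additive add), (is_state add one), (fun f => f).
  split; [exact (positive_additive_lattice_cone hRDP) |].
  split; [exact state_space_base |].
  split; [intros f Sf; exact Sf |].
  split; [intros f Sf; exists f; split; [exact Sf | reflexivity] |].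
  split; [intros f g _ _ Hfg; exact Hfg |].
  intros f g l _ _ _. reflexivity.
Qed.

End StateCone.

Lemma ultrafilter_real_limit {T : Type} {M : classical_sets.set_system T} (u : T -> R) {b : R} :
  filter.UltraFilter M -> M (fun t => Rabs (u t) <= b) ->
  exists l, forall eps, 0 < eps -> M (fun t => Rabs (u t - l) < eps).
Proof.
  intros HM Mb.
  destruct (completeness (fun r => M (fun t => r <= u t))) as [l [l_ub l_least]].
  - exists b. intros r Mr. apply Rnot_lt_le. intros Hbr.
    destruct (filter.filter_ex (filter.filterI Mr Mb)) as [t [Hrt Hbt]].
    pose proof (Rle_abs (u t)). lra.
  - exists (- b). eapply filter.filterS; [| exact Mb]. intros t Hbt.
    pose proof (Rle_abs (- u t)) as Hneg. rewrite Rabs_Ropp in Hneg. lra.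
  - exists l. intros eps Heps.
    assert (Hbelow : exists r, M (fun t => r <= u t) /\ l - eps < r).
    { apply NNPP. intros Hno.
      assert (l <= l - eps); [| lra].
      apply l_least. intros r Mr. apply Rnot_lt_le. intros Hr. apply Hno. exists r. split; assumption. }
    destruct Hbelow as [r [Mr Hr]].
    assert (Mabove : M (fun t => u t < l + eps)).
    { destruct (filter.in_ultra_setVsetC (fun t => l + eps <= u t) HM) as [Mge | Mlt].
      - specialize (l_ub _ Mge). lra.
      - eapply filter.filterS; [| exact Mlt]. intros t Ht. apply Rnot_le_lt. exact Ht. }
    eapply filter.filterS; [| exact (filter.filterI Mr Mabove)].
    intros t [Hrt Htl]. apply Rabs_def1; lra.
Qed.

Section WeakCompactness.
Context {X : Type}.

Definition weakly_closed (S : (X -> R) -> Prop) : Prop :=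
  forall f, (forall (F : list X) (eps : R), 0 < eps ->
               exists g, S g /\ forall x, In x F -> Rabs (g x - f x) < eps) ->
  S f.

Lemma ultrafilter_pointwise_limit {M : classical_sets.set_system (X -> R)} (bound : X -> R) :
  filter.UltraFilter M -> (forall x, M (fun f => Rabs (f x) <= bound x)) ->
  exists f0, forall (F : list X) eps, 0 < eps ->
    M (fun f => forall x, In x F -> Rabs (f x - f0 x) < eps).
Proof.
  intros HM Mbound.
  destruct (choice (fun x l => forall eps, 0 < eps -> M (fun f => Rabs (f x - l) < eps)))
    as [f0 Hf0].
  { intro x. exact (ultrafilter_real_limit (fun f => f x) HM (Mbound x)). }
  exists f0. intros F eps Heps. induction F as [| x F IH].
  - eapply filter.filterS; [| exact filter.filterT]. intros f _ x [].
  - eapply filter.filterS; [| exact (filter.filterI (Hf0 x eps Heps) IH)].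
    intros f [Hx HF] y [<- | Hy]; [exact Hx | exact (HF y Hy)].
Qed.

Definition residual_sets {I : Type} (S : (X -> R) -> Prop) (U : I -> (X -> R) -> Prop) :
    classical_sets.set_system (X -> R) :=
  fun B => exists J : list I, forall f, S f -> (forall i, In i J -> ~ U i f) -> B f.

Lemma residual_sets_proper_filter {I : Type} {S : (X -> R) -> Prop} {U : I -> (X -> R) -> Prop} :
  ~ (exists J : list I, forall f, S f -> exists i, In i J /\ U i f) ->
  filter.ProperFilter (residual_sets S U).
Proof.
  intros Hno. constructor.
  - intros [J HJ]. apply Hno. exists J. intros f Sf.
    apply NNPP. intros Hn. apply (HJ f Sf). intros i Hi Ui. apply Hn. exists i. split; assumption.
  - constructor.
    + exists nil. intros f _ _. constructor.
    + intros A B [JA HA] [JB HB]. exists (JA ++ JB). intros f Sf Hf. split.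
      * apply HA; [exact Sf |]. intros i Hi. apply Hf, in_or_app. left. exact Hi.
      * apply HB; [exact Sf |]. intros i Hi. apply Hf, in_or_app. right. exact Hi.
    + intros A B HAB [J HA]. exists J. intros f Sf Hf. exact (HAB f (HA f Sf Hf)).
Qed.

Lemma weak_compact_of_bounded_closed (S : (X -> R) -> Prop) (bound : X -> R) :
  (forall f x, S f -> Rabs (f x) <= bound x) -> weakly_closed S -> weak_compact S.
Proof.
  intros Sbound Sclosed I U Uopen Ucover. apply NNPP. intros Hno.
  destruct (filter.ultraFilterLemma (residual_sets_proper_filter Hno)) as [M [HM residual_M]].
  assert (MS : M S) by (apply residual_M; exists nil; intros f Sf _; exact Sf).
  destruct (ultrafilter_pointwise_limit bound HM) as [f0 Hf0].
  { intro x. eapply filter.filterS; [| exact MS]. intros f Sf. exact (Sbound f x Sf). }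
  assert (Sf0 : S f0).
  { apply Sclosed. intros F eps Heps.
    destruct (filter.filter_ex (filter.filterI (Hf0 F eps Heps) MS)) as [g [Hg Sg]].
    exists g. split; assumption. }
  destruct (Ucover f0 Sf0) as [i Ui].
  destruct (Uopen i f0 Ui) as [F [eps [Heps HF]]].
  assert (MUi : M (U i)) by (eapply filter.filterS; [exact HF | exact (Hf0 F eps Heps)]).
  assert (MnotUi : M (fun f => ~ U i f)).
  { apply residual_M. exists (i :: nil). intros f _ Hf. apply Hf. left. reflexivity. }
  destruct (filter.filter_ex (filter.filterI MUi MnotUi)) as [f [Hf Hnf]].
  exact (Hnf Hf).
Qed.

End WeakCompactness.

Lemma eq_of_dist_lt (x y : R) : (forall eps, 0 < eps -> Rabs (x - y) < eps) -> x = y.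
Proof.
  intros Hxy. destruct (Req_dec x y) as [| Hne]; [assumption |].
  assert (Hpos : 0 < Rabs (x - y)) by (apply Rabs_pos_lt; lra).
  specialize (Hxy _ Hpos). lra.
Qed.

Lemma state_space_weakly_closed {E : Type} (add : E -> E -> option E) (one : E) :
  weakly_closed (is_state add one).
Proof.
  intros f f_adherent. split; [| split].
  - intro a. apply Rnot_lt_le. intros Hneg.
    destruct (f_adherent (a :: nil) (- f a)) as [g [[Pg _] Hg]]; [lra |].
    specialize (Hg a (or_introl eq_refl)). apply Rabs_def2 in Hg. specialize (Pg a). lra.
  - intros a b c Hc. apply eq_of_dist_lt. intros eps Heps.
    destruct (f_adherent (a :: b :: c :: nil) (eps / 3)) as [g [[_ [Ag _]] Hg]]; [lra |].
    pose proof (Ag _ _ _ Hc).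
    pose proof (Rabs_def2 _ _ (Hg a ltac:(simpl; tauto))).
    pose proof (Rabs_def2 _ _ (Hg b ltac:(simpl; tauto))).
    pose proof (Rabs_def2 _ _ (Hg c ltac:(simpl; tauto))).
    apply Rabs_def1; lra.
  - apply eq_of_dist_lt. intros eps Heps.
    destruct (f_adherent (one :: nil) eps Heps) as [g [[_ [_ Og]] Hg]].
    specialize (Hg one (or_introl eq_refl)). rewrite Og in Hg.
    rewrite <- Rabs_Ropp. replace (- (f one - 1)) with (1 - f one) by ring. exact Hg.
Qed.

Lemma state_space_weak_compact {E : Type} {add : E -> E -> option E} {zero one : E} :
  is_pseudo_effect_algebra add zero one -> weak_compact (is_state add one).
Proof.
  intros hPEA. apply (weak_compact_of_bounded_closed _ (fun _ => 1)).
  - intros s a Ss. apply Rabs_le. pose proof (state_bounded hPEA Ss a). lra.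
  - apply state_space_weakly_closed.
Qed.

Theorem theorem5p1 (E : Type) (add : E -> E -> option E) (zero one : E)
    (hPEA : is_pseudo_effect_algebra add zero one) (hRDP : RDP add) :
  (forall s, ~ is_state add one s) \/
  ((exists s, is_state add one s) /\ is_Choquet_simplex (is_state add one)).
Proof.
  destruct (classic (exists s, is_state add one s)) as [Hne | Hempty].
  - right. split; [exact Hne |].
    split; [exact (state_space_simplex hPEA hRDP) | exact (state_space_weak_compact hPEA)].
  - left. intros s Ss. apply Hempty. exists s. exact Ss.
Qed.
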